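(* Let $A$ be a set and $\phi$ a linear form on the span of nonempty words over $A$. Extend $\phi$ to a linear form on $H_{\mathcal S}(A)$ by setting $\phi(T\otimes w)=\phi(w)$ if $T$ is a corolla (a tree whose only internal vertex is the root), $\phi(T\otimes w)=0$ for the other decorated trees, and $\phi=0$ on $1$ and on products of two or more decorated trees. Let $\Phi$ be the character (unital algebra morphism $H_{\mathcal S}(A)\to\mathbb{C}$) that agrees with $\phi$ on decorated trees. Let $\kappa$ be the linear form on $H_{\mathcal S}(A)$ vanishing on $1$ and on products of two or more decorated trees, and given on decorated trees by $$\kappa(T\otimes a_1\cdots a_n)=\begin{cases}(-1)^{i(T)-1}\displaystyle\prod_{v\text{ internal vertex of }T}\phi\Big(\prod_{v\measuredangle i}a_i\Big)&\text{if }T\in\mathrm{PST}_n,\\ 0&\text{otherwise.}\end{cases}$$ Then $\Phi=\epsilon+\kappa\prec\Phi$.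
   Context: A reduced plane tree is a rooted plane tree in which every internal node has at least two children; its weight is its number of leaves minus 1, and $i(T)$ is its number of internal vertices. A tree is prime if it has at least two leaves and the rightmost child of its root is a leaf; $\mathrm{PST}_n$ is the set of prime trees of weight $n$. For $T$ with leaves $\ell_1,\dots,\ell_{n+1}$ from left to right, $v\measuredangle i$ means that the internal vertex $v$ is the lowest common ancestor of $\ell_i$ and $\ell_{i+1}$ ($v$ has a clear view to the $i$th sector); the inner product is taken in increasing order of $i$. $H_{\mathcal S}(A)$ is the algebra with basis finite products (concatenations) of $A$-decorated trees $T\otimes a_1\cdots a_n$ (a tree of weight $n\ge1$ with sectors labeled left to right by $a_1,\dots,a_n\in A$), unit $1$ the empty product. An admissible cut of $T$ is a (possibly empty) set $c$ of internal vertices with at most one vertex on each root-to-leaf path; $P^c(T)$ is the left-to-right product of the subtrees rooted at vertices of $c$, each decorated by the letters of the sectors seen by its vertices, and $R^c(T)$ is $T$ with these subtrees replaced by leaves, decorated by the letters of the sectors seen by its remaining internal vertices. $\Delta(T\otimes w)=\sum_cR^c(T)\otimes P^c(T)$, extended multiplicatively; $\Delta^+_{\prec}(T\otimes w)$ is this sum restricted to cuts for which the rightmost leaf of $T$ remains in $R^c(T)$, and $\Delta^+_{\prec}(x_1\cdots x_s)=\Delta^+_{\prec}(x_1)\Delta(x_2\cdots x_s)$. For linear forms $f,g$ on $H_{\mathcal S}(A)$, $(f\prec g)(1)=0$ and $(f\prec g)(x)=m\circ(f\otimes g)\circ\Delta^+_{\prec}(x)$ for $x$ in the augmentation ideal,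 $m$ being multiplication in $\mathbb{C}$. $\epsilon$ is the counit: $\epsilon(1)=1$ and $\epsilon=0$ on the augmentation ideal. *)

From mathcomp Require Import all_boot all_order all_algebra.
Set Implicit Arguments. Unset Strict Implicit. Unset Printing Implicit Defensive.
Import Order.TTheory GRing.Theory Num.Theory.

Section DTrees.
Variable A : Type.

(* A plane tree whose sectors carry letters of A.  [DNode c r] is an internal
   vertex with children [c :: map snd r]; the letter in [(a, t) \in r] is the
   label of the sector lying between the child preceding [t] and [t], i.e. of
   the sector to which this vertex has a clear view (it is the lowest common
   ancestor of the two leaves bounding this sector). *)
Inductive dtree : Type :=
| DLeaf
| DNode of dtree & seq (A * dtree).

Definition is_node (t : dtree) : bool := if t is DNode _ _ then true else false.

Definition children (t : dtree) : seq dtree :=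
  if t is DNode c r then c :: map snd r else [::].

(* letters of the sectors seen by the root, in increasing order of i *)
Definition root_letters (t : dtree) : seq A :=
  if t is DNode _ r then map fst r else [::].

Fixpoint reduced (t : dtree) : bool :=
  match t with
  | DLeaf => true
  | DNode c r =>
      [&& ~~ nilp r, reduced c &
        (fix aux (r : seq (A * dtree)) : bool :=
           match r with [::] => true | (_, t') :: r' => reduced t' && aux r' end) r]
  end.

Fixpoint word (t : dtree) : seq A :=
  match t with
  | DLeaf => [::]
  | DNode c r =>
      word c ++
        (fix aux (r : seq (A * dtree)) : seq A :=
           match r with [::] => [::] | (a, t') :: r' => a :: word t' ++ aux r' end) r
  end.

(* weight = number of leaves - 1 = number of sectors *)
Definition weight (t : dtree) : nat := size (word t).

(* a decorated tree T (x) a_1...a_n : reduced tree of weight n >= 1 *)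
Definition dtree_ok (t : dtree) : bool := is_node t && reduced t.

(* vertices are addressed by the sequence of child indices from the root *)
Definition child (t : dtree) (i : nat) : option dtree :=
  if i < size (children t) then Some (nth DLeaf (children t) i) else None.

Fixpoint subtree (t : dtree) (p : seq nat) : option dtree :=
  match p with
  | [::] => Some t
  | i :: p' => if child t i is Some t' then subtree t' p' else None
  end.

(* addresses of internal vertices, in preorder (= left-to-right order for
   vertices none of which is an ancestor of another) *)
Fixpoint ivs (t : dtree) : seq (seq nat) :=
  match t with
  | DLeaf => [::]
  | DNode c r =>
      [::] :: [seq 0 :: p | p <- ivs c] ++
        (fix aux (k : nat) (r : seq (A * dtree)) : seq (seq nat) :=
           match r with
           | [::] => [::]
           | (_, t') :: r' => [seq k :: p | p <- ivs t'] ++ aux k.+1 r'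
           end) 1 r
  end.

Fixpoint lvs (t : dtree) : seq (seq nat) :=
  match t with
  | DLeaf => [:: [::]]
  | DNode c r =>
      [seq 0 :: p | p <- lvs c] ++
        (fix aux (k : nat) (r : seq (A * dtree)) : seq (seq nat) :=
           match r with
           | [::] => [::]
           | (_, t') :: r' => [seq k :: p | p <- lvs t'] ++ aux k.+1 r'
           end) 1 r
  end.

Definition nint (t : dtree) : nat := size (ivs t).

Definition rightmost_leaf (t : dtree) : seq nat := last [::] (lvs t).

Fixpoint subsets (T : Type) (s : seq T) : seq (seq T) :=
  match s with
  | [::] => [:: [::]]
  | x :: s' => [seq x :: u | u <- subsets s'] ++ subsets s'
  end.

Definition admissible (t : dtree) (c : seq (seq nat)) : bool :=
  all (fun l => count (fun p => prefix p l) c <= 1) (lvs t).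

Definition cuts (t : dtree) : seq (seq (seq nat)) :=
  [seq c <- subsets (ivs t) | admissible t c].

Definition sub_addr (i : nat) (c : seq (seq nat)) : seq (seq nat) :=
  pmap (fun p => if p is j :: q then if j == i then Some q else None else None) c.

Fixpoint prune (t : dtree) (c : seq (seq nat)) : dtree :=
  if [::] \in c then DLeaf else
  match t with
  | DLeaf => DLeaf
  | DNode c0 r =>
      DNode (prune c0 (sub_addr 0 c))
        ((fix aux (k : nat) (r : seq (A * dtree)) : seq (A * dtree) :=
            match r with
            | [::] => [::]
            | (a, t') :: r' => (a, prune t' (sub_addr k c)) :: aux k.+1 r'
            end) 1 r)
  end.

(* A basis element of H_S(A): a finite product (concatenation) of decorated
   trees; the empty product is the unit 1.  A tree reduced to a single leaf
   (weight 0) is identified with 1. *)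
Definition basis_of_tree (t : dtree) : seq dtree := if is_node t then [:: t] else [::].

Definition pcut (t : dtree) (c : seq (seq nat)) : seq dtree :=
  pmap (subtree t) c.

Definition rcut (t : dtree) (c : seq (seq nat)) : seq dtree :=
  basis_of_tree (prune t c).

Definition delta_tree (t : dtree) : seq (seq dtree * seq dtree) :=
  [seq (rcut t c, pcut t c) | c <- cuts t].

Definition ldelta_tree (t : dtree) : seq (seq dtree * seq dtree) :=
  [seq (rcut t c, pcut t c) |
     c <- cuts t & all (fun p => ~~ prefix p (rightmost_leaf t)) c].

(* Delta extended multiplicatively, in the tensor product (a(x)b)(c(x)d)=ac(x)bd *)
Fixpoint delta (x : seq dtree) : seq (seq dtree * seq dtree) :=
  match x with
  | [::] => [:: ([::], [::])]
  | t :: x' => [seq (u.1 ++ v.1, u.2 ++ v.2) | u <- delta_tree t, v <- delta x']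
  end.

Definition ldelta (x : seq dtree) : seq (seq dtree * seq dtree) :=
  match x with
  | [::] => [::]
  | t :: x' => [seq (u.1 ++ v.1, u.2 ++ v.2) | u <- ldelta_tree t, v <- delta x']
  end.

Definition corolla (t : dtree) : bool :=
  if t is DNode _ _ then all (fun u => ~~ is_node u) (children t) else false.

Definition prime_tree (t : dtree) : bool :=
  (1 < size (lvs t)) && ~~ is_node (last DLeaf (children t)).

End DTrees.

Arguments DLeaf {A}.

Section Forms.
Variables (A : Type) (C : comNzRingType).
Local Open Scope ring_scope.

(* A linear form on H_S(A) is given by its values on the basis of finite
   products of decorated trees. *)
Definition lform := seq (dtree A) -> C.

Definition counit : lform := fun x => if x is [::] then 1 else 0.

Definition prec (f g : lform) : lform :=
  fun x => \sum_(u <- ldelta x) f u.1 * g u.2.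

Definition phi_ext (phi : seq A -> C) : lform :=
  fun x => if x is [:: t] then (if corolla t then phi (word t) else 0) else 0.

Definition Phi_char (phi : seq A -> C) : lform :=
  fun x => \prod_(t <- x) phi_ext phi [:: t].

Definition kappa_tree (phi : seq A -> C) (t : dtree A) : C :=
  if prime_tree t then
    (-1) ^+ (nint t).-1 *
      \prod_(p <- ivs t) phi (root_letters (odflt DLeaf (subtree t p)))
  else 0.

Definition kappa (phi : seq A -> C) : lform :=
  fun x => if x is [:: t] then kappa_tree phi t else 0.

End Forms.

From mathcomp Require Import all_boot all_order all_algebra.
From mathcomp Require Import ring.
Set Implicit Arguments. Unset Strict Implicit. Unset Printing Implicit Defensive.
Import GRing.Theory Num.Theory.

(* Expanding [kappa ≺ Phi] on x_1 ... x_s, kappa kills every term whose left factor is not a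
   single tree, and the right factors coming from x_2 ... x_s sum back to Phi (x_2 ... x_s) by
   the counit property of Delta.  So it suffices that, for a decorated tree T,
     phi_ext T = \sum_c kappa (R^c T) Phi (P^c T),
   the sum running over the cuts c avoiding the rightmost leaf.  Such a cut misses the root, so
   the sign, the vertex weights and the primality of R^c T, as well as P^c T, split over the
   children of the root, and the sum factors into one sum per child.  For every child s but the
   last one the factor is the signed cut sum
     S(s) = \sum_c (-1)^(i(R^c s)) (\prod_(v in R^c s) phi(letters seen by v)) Phi (P^c s),
   and S(s) = [s is a leaf]: the cut at the root contributes phi_ext s, and the other cuts
   contribute -phi(root letters) \prod S(children), which by induction is -phi_ext s.  For the
   last child primality forces the same indicator.  Hence only corollas survive, with value
   phi (word T). *)

Section Subsets.
Variable X : Type.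

Lemma subsets_cons x (s : seq X) :
  subsets (x :: s) = [seq x :: u | u <- subsets s] ++ subsets s.
Proof. by []. Qed.

Lemma subsets_cat (s1 s2 : seq X) :
  subsets (s1 ++ s2) = [seq u ++ v | u <- subsets s1, v <- subsets s2].
Proof.
elim: s1 => [|x s1 IH] /=; first by rewrite cats0 map_id.
by rewrite IH allpairs_cat map_allpairs allpairs_mapl.
Qed.

Lemma subsets_map Y (f : X -> Y) s : subsets (map f s) = map (map f) (subsets s).
Proof. by elim: s => //= x s ->; rewrite map_cat -!map_comp. Qed.

Lemma sum_subsets_nilp (R : pzSemiRingType) (s : seq X) (F : seq X -> R) :
  (\sum_(u <- subsets s) (nilp u)%:R * F u = F [::])%R.
Proof.
elim: s => [|x s IH] /=; first by rewrite big_seq1 mul1r.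
rewrite big_cat big_map big1 => [|u _]; last by rewrite mul0r.
by rewrite Monoid.simpm.
Qed.

End Subsets.

Lemma mem_subsets (X : eqType) (s u : seq X) : u \in subsets s -> {subset u <= s}.
Proof.
elim: s u => [|x s IH] u /=; first by rewrite mem_seq1 => /eqP ->.
rewrite mem_cat => /orP [/mapP [v Hv ->] y|Hu y Hy].
  by rewrite !in_cons => /orP [->//|/(IH _ Hv) ->]; rewrite orbT.
by rewrite in_cons (IH _ Hu _ Hy) orbT.
Qed.

Lemma sub_addr_cat i u v : sub_addr i (u ++ v) = sub_addr i u ++ sub_addr i v.
Proof. exact: pmap_cat. Qed.

Lemma sub_addr_cons j p u : sub_addr j (p :: u) =
  if p is i :: q then (if i == j then q :: sub_addr j u else sub_addr j u) else sub_addr j u.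
Proof. by rewrite /sub_addr /=; case: p => // i q; case: eqP. Qed.

Arguments sub_addr : simpl never.

Lemma sub_addr_shift j k a :
  sub_addr j [seq k :: q | q <- a] = if k == j then a else [::].
Proof. by elim: a => [|q a IH] /=; [case: eqP | rewrite sub_addr_cons IH; case: eqP]. Qed.

Lemma sub_addr_other j u :
  all (fun p => if p is i :: _ then i != j else true) u -> sub_addr j u = [::].
Proof.
elim: u => // -[|i q] u IH /=; first by rewrite sub_addr_cons => /IH.
by case/andP=> /negbTE ij /IH; rewrite sub_addr_cons ij.
Qed.

Section Trees.
Variable A : Type.
Implicit Types (t c : dtree A) (r : seq (A * dtree A)) (ts : seq (dtree A)).
Implicit Types (u : seq (seq nat)) (f : dtree A -> seq (seq nat)).
Local Notation kids c r := (c :: map snd r).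

(* Past the last child [nth] returns [DLeaf], so [i] needs no bound. *)
Lemma dtree_nth_ind (P : dtree A -> Prop) :
  P DLeaf -> (forall c r, (forall i, P (nth DLeaf (kids c r) i)) -> P (DNode c r)) ->
  forall t, P t.
Proof.
move=> PL PN; fix IH 1 => -[|c r]; first exact: PL.
apply: PN => -[|i] /=; first exact: IH.
elim: r i => [|[a t] r IHr] [|i] /=; [exact: PL | exact: PL | exact: IH | exact: IHr].
Qed.

Fixpoint child_addrs f k ts : seq (seq nat) :=
  if ts is t :: ts' then [seq k :: p | p <- f t] ++ child_addrs f k.+1 ts' else [::].

Lemma ivs_node c r : ivs (DNode c r) = [::] :: child_addrs (@ivs A) 0 (kids c r).
Proof. by rewrite /=; congr (_ :: _ ++ _); elim: r 1 => //= -[a t] r IH k; rewrite IH. Qed.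

Lemma lvs_node c r : lvs (DNode c r) = child_addrs (@lvs A) 0 (kids c r).
Proof. by rewrite /=; congr (_ ++ _); elim: r 1 => //= -[a t] r IH k; rewrite IH. Qed.

Lemma child_addrsP f k ts p : p \in child_addrs f k ts ->
  exists i q, [/\ i < size ts, q \in f (nth DLeaf ts i) & p = (k + i) :: q].
Proof.
elim: ts k => //= t ts IH k; rewrite mem_cat => /orP [/mapP [q q_t ->]|].
  by exists 0, q; rewrite addn0.
by case/IH=> i [q [lt_i q_i ->]]; exists i.+1, q; rewrite addSnnS.
Qed.

Lemma mem_child_addrs f k ts i q : i < size ts -> q \in f (nth DLeaf ts i) ->
  (k + i) :: q \in child_addrs f k ts.
Proof.
elim: ts k i => //= t ts IH k [|i] lt_i q_i; rewrite mem_cat.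
  by rewrite addn0 map_f.
by rewrite -addSnnS IH ?orbT.
Qed.

Lemma big_child_addrs (R : Type) (idx : R) (op : Monoid.law idx) f k ts F :
  \big[op/idx]_(p <- child_addrs f k ts) F p =
  \big[op/idx]_(i < size ts) \big[op/idx]_(q <- f (nth DLeaf ts i)) F ((k + i) :: q).
Proof.
elim: ts k => [|t ts IH] k /=; first by rewrite big_nil big_ord0.
rewrite big_cat big_map IH big_ord_recl /=; congr (op _ _).
  by apply: eq_bigr => q _; rewrite addn0.
by apply: eq_bigr => i _; apply: eq_bigr => q _; rewrite addSnnS.
Qed.

Lemma size_child_addrs f k ts :
  size (child_addrs f k ts) = \sum_(i < size ts) size (f (nth DLeaf ts i)).
Proof.
elim: ts k => [|t ts IH] k /=; first by rewrite big_ord0.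
by rewrite size_cat size_map IH big_ord_recl.
Qed.

Lemma last_child_addrs f k t ts : (forall s, 0 < size (f s)) ->
  last [::] (child_addrs f k (t :: ts)) = (k + size ts) :: last [::] (f (last t ts)).
Proof.
move=> f_gt0; elim: ts k t => [|t' ts IH] k t.
  by rewrite /= cats0 addn0; case: (f t) (f_gt0 t) => //= p s _; rewrite last_map.
rewrite [child_addrs _ _ _]/= last_cat -/(child_addrs f k.+1 (t' :: ts)).
have last_default x :
    last x (child_addrs f k.+1 (t' :: ts)) = last [::] (child_addrs f k.+1 (t' :: ts)).
  by rewrite /=; case: (f t') (f_gt0 t').
by rewrite last_default IH addSnnS.
Qed.

Definition in_subtrees n u := all (fun p => if p is i :: _ then i < n else false) u.

Lemma in_subtrees_root n u : in_subtrees n u -> [::] \notin u.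
Proof. by move=> /allP u_sub; apply/negP => /u_sub. Qed.

Lemma in_subtrees_subsets f ts u :
  u \in subsets (child_addrs f 0 ts) -> in_subtrees (size ts) u.
Proof.
by move=> u_sub; apply/allP => p /(mem_subsets u_sub) /child_addrsP [i [q [lt_i _ ->]]].
Qed.

Lemma sum_subsets_child_addrs (R : comNzRingType) (h : nat -> seq (seq nat) -> R) f ts :
  (\sum_(u <- subsets (child_addrs f 0 ts)) \prod_(i < size ts) h i (sub_addr i u)
  = \prod_(i < size ts) \sum_(a <- subsets (f (nth DLeaf ts i))) h i a)%R.
Proof.
suff shifted k : (\sum_(u <- subsets (child_addrs f k ts))
    \prod_(i < size ts) h i (sub_addr (k + i) u) =
  \prod_(i < size ts) \sum_(a <- subsets (f (nth DLeaf ts i))) h i a)%R by exact: shifted 0.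
elim: ts k h => [|t ts IH] k h /=; first by rewrite big_ord0 big_seq1 big_ord0.
rewrite subsets_cat subsets_map big_allpairs_dep big_map big_ord_recl big_distrl /=.
apply: eq_bigr => a _; rewrite -(IH k.+1 (fun i => h i.+1)) big_distrr big_seq [RHS]big_seq.
apply: eq_bigr => v v_sub; rewrite big_ord_recl; congr (_ * _)%R.
  rewrite addn0 sub_addr_cat sub_addr_shift eqxx sub_addr_other ?cats0 //.
  apply/allP => p /(mem_subsets v_sub) /child_addrsP [i [q [_ _ ->]]].
  by rewrite gtn_eqF // addSn ltnS leq_addr.
apply: eq_bigr => i _; rewrite sub_addr_cat sub_addr_shift /= addnS addSn.
by rewrite ltn_eqF // ltnS leq_addr.
Qed.

Lemma subtree_node c r i q : i < size (kids c r) ->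
  subtree (DNode c r) (i :: q) = subtree (nth DLeaf (kids c r) i) q.
Proof. by move=> lt_i; rewrite /= /child /= lt_i. Qed.

Lemma nint_node c r :
  nint (DNode c r) = (\sum_(i < size (kids c r)) nint (nth DLeaf (kids c r) i)).+1.
Proof. by rewrite /nint ivs_node -(size_child_addrs _ 0). Qed.

Lemma size_lvs_node c r :
  size (lvs (DNode c r)) = \sum_(i < size (kids c r)) size (lvs (nth DLeaf (kids c r) i)).
Proof. by rewrite lvs_node size_child_addrs. Qed.

Lemma lvs_gt0 t : 0 < size (lvs t).
Proof.
elim/dtree_nth_ind: t => // c r IH.
by rewrite size_lvs_node big_ord_recl ltn_addr //; exact: (IH 0).
Qed.

Lemma rightmost_leaf_node c r :
  rightmost_leaf (DNode c r) = size r :: rightmost_leaf (last c (map snd r)).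
Proof. by rewrite /rightmost_leaf lvs_node last_child_addrs ?size_map //; apply: lvs_gt0. Qed.

Lemma ivs_below_leaf t q : q \in ivs t -> exists2 l, l \in lvs t & prefix q l.
Proof.
elim/dtree_nth_ind: t q => // c r IH q; rewrite ivs_node in_cons.
case/orP=> [/eqP -> | /child_addrsP [i [q' [lt_i q'_i ->]]]].
  exists (nth [::] (lvs (DNode c r)) 0); first exact: mem_nth (lvs_gt0 _).
  by case: (nth _ _ _).
have [l l_i q'l] := IH i q' q'_i.
exists (i :: l); last by rewrite /= eqxx.
by rewrite lvs_node -[i]add0n mem_child_addrs.
Qed.

Lemma count_prefix_cons u i l :
  count (fun p => prefix p (i :: l)) u =
  count_mem [::] u + count (fun p => prefix p l) (sub_addr i u).
Proof.
elim: u => //= [[|j q] u IH]; rewrite IH sub_addr_cons ?addnA //=.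
by have [<-|_] := eqVneq j i; rewrite /= !add0n // addnCA addnA.
Qed.

Lemma admissible_node c r u : [::] \notin u ->
  admissible (DNode c r) u = \big[andb/true]_(i < size (kids c r))
     admissible (nth DLeaf (kids c r) i) (sub_addr i u).
Proof.
move=> /count_memPn u_root; rewrite /admissible lvs_node -big_all big_child_addrs.
apply: eq_bigr => i _; rewrite -big_all; apply: eq_bigr => l _.
by rewrite count_prefix_cons u_root.
Qed.

Lemma admissible_root c r u : u \in subsets (child_addrs (@ivs A) 0 (kids c r)) ->
  admissible (DNode c r) ([::] :: u) = nilp u.
Proof.
case: u => [_|p u u_sub]; first by apply/allP => -[].
apply/negbTE/allP => adm.
have /child_addrsP [i [q [lt_i q_i p_eq]]] := mem_subsets u_sub (mem_head p u).
have [l l_i ql] := ivs_below_leaf q_i.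
have := adm (i :: l); rewrite lvs_node -[i]add0n mem_child_addrs // => /(_ isT).
by rewrite /= p_eq /= eqxx ql /= !add1n ltnS ltn0.
Qed.

Lemma all_nprefix_cons u i l : [::] \notin u ->
  all (fun p => ~~ prefix p (i :: l)) u = all (fun p => ~~ prefix p l) (sub_addr i u).
Proof.
elim: u => // -[|j q] u IH; rewrite in_cons negb_or //= => /IH ->.
by rewrite sub_addr_cons; case: (j == i).
Qed.

Lemma word_corolla c r :
  all (fun t => ~~ is_node t) (kids c r) -> word (DNode c r) = map fst r.
Proof.
case: c => [|//] /=; elim: r => //= -[a t] r IH /andP [].
by case: t => // _ /IH /= ->.
Qed.

Lemma prune_root t u : [::] \in u -> prune t u = DLeaf.
Proof. by case: t => [|c r] /= ->. Qed.

Lemma prune_node c r u : [::] \notin u -> exists c' r',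
  [/\ prune (DNode c r) u = DNode c' r', map fst r' = map fst r, size r' = size r &
      forall i, nth DLeaf (kids c' r') i = prune (nth DLeaf (kids c r) i) (sub_addr i u)].
Proof.
move=> /negbTE u_root; rewrite /= u_root.
eexists; eexists; split; first reflexivity.
- by elim: r 1 => //= -[a t] r IH k; congr (_ :: _); exact: IH.
- by elim: r 1 => //= -[a t] r IH k; congr _.+1; exact: IH.
case=> // i /=; rewrite -[i.+1]add1n.
elim: r 1 i => [|[a t] r IH] k [|i] /=; rewrite ?addn0 //; try by case: ifP.
by rewrite -addSnnS IH.
Qed.

End Trees.

Section CutSums.
Variables (A : Type) (R : comNzRingType) (phi : seq A -> R).
Local Open Scope ring_scope.
Implicit Types (t c : dtree A) (r : seq (A * dtree A)) (u : seq (seq nat)).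
Local Notation kids c r := (c :: map snd r).

Lemma Phi_char_cons t x : Phi_char phi (t :: x) = phi_ext phi [:: t] * Phi_char phi x.
Proof. exact: big_cons. Qed.

Lemma Phi_char_cat x y : Phi_char phi (x ++ y) = Phi_char phi x * Phi_char phi y.
Proof. exact: big_cat. Qed.

Lemma natr_bigand n (b : 'I_n -> bool) :
  (\big[andb/true]_(i < n) b i)%:R = \prod_(i < n) (b i)%:R :> R.
Proof. by apply: (big_morph (fun b : bool => b%:R)) => // -[] []; rewrite ?mul1r ?mul0r. Qed.

Lemma prod_sub_addr n (F : seq nat -> R) u : in_subtrees n u ->
  \prod_(p <- u) F p = \prod_(i < n) \prod_(q <- sub_addr i u) F (nat_of_ord i :: q).
Proof.
elim: u => [_|[|j q] u IH] //=.
  by rewrite big_nil big1 // => i _; rewrite /sub_addr big_nil.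
case/andP=> lt_j u_n; rewrite big_cons IH //.
rewrite (bigD1 (Ordinal lt_j)) //= [in RHS](bigD1 (Ordinal lt_j)) //=.
rewrite sub_addr_cons eqxx big_cons mulrA; congr (_ * _).
apply: eq_bigr => i ij; rewrite sub_addr_cons; case: eqP => // ji.
by case/eqP: ij; apply: val_inj.
Qed.

Definition phi_vertices t : R :=
  \prod_(p <- ivs t) phi (root_letters (odflt DLeaf (subtree t p))).

Definition cut_weight t u : R :=
  (-1) ^+ nint (prune t u) * phi_vertices (prune t u) * Phi_char phi (pcut t u).

Definition cut_sum t : R := \sum_(u <- subsets (ivs t)) (admissible t u)%:R * cut_weight t u.

Lemma phi_vertices_node c r : phi_vertices (DNode c r) =
  phi (map fst r) * \prod_(i < size (kids c r)) phi_vertices (nth DLeaf (kids c r) i).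
Proof.
rewrite /phi_vertices ivs_node big_cons big_child_addrs; congr (_ * _).
by apply: eq_bigr => i _; apply: eq_bigr => q _; rewrite add0n subtree_node.
Qed.

Lemma Phi_char_pcut_node c r u : in_subtrees (size (kids c r)) u ->
  Phi_char phi (pcut (DNode c r) u) = \prod_(i < size (kids c r))
    Phi_char phi (pcut (nth DLeaf (kids c r) i) (sub_addr i u)).
Proof.
move=> u_kids; rewrite /Phi_char /pcut big_pmap (prod_sub_addr _ u_kids).
apply: eq_bigr => i _; rewrite [in RHS]big_pmap.
by apply: eq_bigr => q _; rewrite subtree_node.
Qed.

Lemma phi_ext_node c r : phi_ext phi [:: DNode c r] =
  phi (map fst r) * \prod_(i < size (kids c r)) (~~ is_node (nth DLeaf (kids c r) i))%:R.
Proof.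
rewrite /phi_ext; case: ifP => [corolla_t | /negbT].
  rewrite word_corolla // big1 ?mulr1 // => i _.
  by rewrite (all_nthP DLeaf corolla_t i (ltn_ord i)).
rewrite /corolla /children -has_predC => /(has_nthP DLeaf) [i lt_i /negPn node_i].
by rewrite (bigD1 (Ordinal lt_i)) //= node_i mul0r mulr0.
Qed.

Section PrunedNode.
Variables (c : dtree A) (r : seq (A * dtree A)) (u : seq (seq nat)).
Hypothesis u_root : [::] \notin u.
Local Notation pruned_kid i := (prune (nth DLeaf (kids c r) i) (sub_addr i u)).

Lemma nint_prune :
  nint (prune (DNode c r) u) = (\sum_(i < size (kids c r)) nint (pruned_kid i)).+1.
Proof.
have [c' [r' [-> _ size_r' kids_r']]] := prune_node c r u_root.
have size_kids : size (kids c' r') = size (kids c r) by rewrite /= !size_map size_r'.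
by rewrite nint_node size_kids; congr _.+1; apply: eq_bigr => i _; rewrite kids_r'.
Qed.

Lemma phi_vertices_prune : phi_vertices (prune (DNode c r) u) =
  phi (map fst r) * \prod_(i < size (kids c r)) phi_vertices (pruned_kid i).
Proof.
have [c' [r' [-> fst_r' size_r' kids_r']]] := prune_node c r u_root.
have size_kids : size (kids c' r') = size (kids c r) by rewrite /= !size_map size_r'.
rewrite phi_vertices_node size_kids fst_r'; congr (_ * _).
by apply: eq_bigr => i _; rewrite kids_r'.
Qed.

Lemma prime_prune : (0 < size r)%N ->
  prime_tree (prune (DNode c r) u) =
  ~~ is_node (prune (last c (map snd r)) (sub_addr (size r) u)).
Proof.
move=> r_gt0; have [c' [r' [-> _ size_r' kids_r']]] := prune_node c r u_root.
rewrite /prime_tree size_lvs_node /= !(last_nth DLeaf) !size_map size_r' kids_r'.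
rewrite (@leq_trans (\sum_(i < (size r).+1) 1)) ?leq_sum // => [|i _].
  by rewrite sum1_card card_ord ltnS.
exact: lvs_gt0.
Qed.

End PrunedNode.

Lemma cut_weight_root c r : cut_weight (DNode c r) [:: [::]] = phi_ext phi [:: DNode c r].
Proof.
rewrite /cut_weight prune_root ?mem_head // /phi_vertices /Phi_char /= big_nil big_seq1.
by rewrite expr0 !mul1r.
Qed.

Lemma cut_weight_node c r u : in_subtrees (size (kids c r)) u ->
  (admissible (DNode c r) u)%:R * cut_weight (DNode c r) u =
  - phi (map fst r) * \prod_(i < size (kids c r))
      ((admissible (nth DLeaf (kids c r) i) (sub_addr i u))%:R *
       cut_weight (nth DLeaf (kids c r) i) (sub_addr i u)).
Proof.
move=> u_kids; have u_root := in_subtrees_root u_kids.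
rewrite admissible_node // natr_bigand /cut_weight nint_prune // phi_vertices_prune //.
rewrite Phi_char_pcut_node // exprS expr_sum !big_split /=.
ring.
Qed.

Lemma cut_sum_node c r : cut_sum (DNode c r) = phi_ext phi [:: DNode c r] -
  phi (map fst r) * \prod_(i < size (kids c r)) cut_sum (nth DLeaf (kids c r) i).
Proof.
rewrite /cut_sum ivs_node subsets_cons big_cat big_map; congr (_ + _).
  rewrite big_seq (eq_bigr (fun u => (nilp u)%:R * cut_weight (DNode c r) ([::] :: u))).
    by rewrite -big_seq sum_subsets_nilp cut_weight_root.
  by move=> u u_sub; rewrite admissible_root.
rewrite big_seq (eq_bigr _ (fun u u_sub => cut_weight_node (in_subtrees_subsets u_sub))).
rewrite -big_seq -big_distrr -mulNr; congr (_ * _).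
exact: (sum_subsets_child_addrs (fun i a =>
  (admissible (nth DLeaf (kids c r) i) a)%:R * cut_weight (nth DLeaf (kids c r) i) a)).
Qed.

Lemma cut_sumE t : cut_sum t = (~~ is_node t)%:R.
Proof.
elim/dtree_nth_ind: t => [|c r IH].
  by rewrite /cut_sum big_seq1 /cut_weight /phi_vertices /Phi_char /= !big_nil !mulr1.
rewrite cut_sum_node; under eq_bigr => i _ do rewrite IH.
by rewrite phi_ext_node subrr.
Qed.

End CutSums.

Section KappaPrec.
Variables (A : Type) (R : comNzRingType) (phi : seq A -> R).
Local Open Scope ring_scope.
Implicit Types (t : dtree A) (u : seq (seq nat)).
Local Notation cut_weight := (cut_weight phi).
Local Notation avoids_rightmost t u := (all (fun p => ~~ prefix p (rightmost_leaf t)) u).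

Lemma leaf_pruning_cut_sum t :
  \sum_(u <- subsets (ivs t)) (admissible t u)%:R * cut_weight t u *
    ((avoids_rightmost t u)%:R * (~~ is_node (prune t u))%:R) = (~~ is_node t)%:R.
Proof.
case: t => [|c r].
  by rewrite /= big_seq1 /cut_weight /phi_vertices /Phi_char /= !big_nil !mulr1.
rewrite big1 // => u _.
case: (boolP ([::] \in u)) => [u_root | /(prune_node c r) [c' [r' [-> _ _ _]]]].
  suff -> : avoids_rightmost (DNode c r) u = false by rewrite mul0r mulr0.
  by apply/negbTE/allP => /(_ _ u_root); case: (rightmost_leaf _).
by rewrite /= !mulr0.
Qed.

Section Node.
Variables (c : dtree A) (r : seq (A * dtree A)).
Hypothesis r_gt0 : (0 < size r)%N.
Local Notation kids := (c :: map snd r).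
Local Notation kid i := (nth DLeaf kids i).

(* Primality of [R^c T] and avoidance of the rightmost leaf only constrain the last child. *)
Definition kappa_factor i a : R :=
  (admissible (kid i) a)%:R * cut_weight (kid i) a *
  (if i == size r then (avoids_rightmost (kid i) a)%:R * (~~ is_node (prune (kid i) a))%:R
   else 1).

Lemma kappa_cut_term u : in_subtrees (size kids) u ->
  (if admissible (DNode c r) u && avoids_rightmost (DNode c r) u
   then kappa_tree phi (prune (DNode c r) u) * Phi_char phi (pcut (DNode c r) u) else 0)
  = phi (map fst r) * \prod_(i < size kids) kappa_factor i (sub_addr i u).
Proof.
move=> u_kids; have u_root := in_subtrees_root u_kids.
rewrite rightmost_leaf_node all_nprefix_cons // admissible_node // /kappa_tree prime_prune //.
have ifr0 (b : bool) (x : R) : (if b then x else 0) = b%:R * x by rewrite mulr_natl mulrb.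
rewrite !ifr0 -mulnb natrM natr_bigand nint_prune // succnK expr_sum.
rewrite -/(phi_vertices phi (prune (DNode c r) u)) phi_vertices_prune //.
rewrite Phi_char_pcut_node // /kappa_factor /cut_weight !big_split /=.
have lt_r : (size r < size kids)%N by rewrite /= size_map.
have last_kid : \prod_(i < size kids) (if nat_of_ord i == size r then
      (avoids_rightmost (kid i) (sub_addr i u))%:R *
      (~~ is_node (prune (kid i) (sub_addr i u)))%:R else 1) =
    (avoids_rightmost (last c (map snd r)) (sub_addr (size r) u))%:R *
    (~~ is_node (prune (last c (map snd r)) (sub_addr (size r) u)))%:R :> R.
  rewrite (bigD1 (Ordinal lt_r)) //= eqxx big1 ?mulr1 ?(last_nth DLeaf) ?size_map // => i.
  by rewrite -val_eqE => /negbTE ->.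
rewrite last_kid.
ring.
Qed.

Lemma kappa_prec_node :
  \sum_(u <- cuts (DNode c r) | avoids_rightmost (DNode c r) u)
     kappa_tree phi (prune (DNode c r) u) * Phi_char phi (pcut (DNode c r) u)
  = phi_ext phi [:: DNode c r].
Proof.
rewrite /cuts big_filter_cond big_mkcond ivs_node subsets_cons big_cat big_map.
rewrite big1 => [|u _]; last by rewrite rightmost_leaf_node /= andbF.
rewrite big_seq (eq_bigr _ (fun u u_sub => kappa_cut_term (in_subtrees_subsets u_sub))).
rewrite -big_seq -big_distrr phi_ext_node Monoid.simpm; congr (_ * _).
rewrite (sum_subsets_child_addrs kappa_factor).
apply: eq_bigr => i _; rewrite /kappa_factor.
case: eqP => _; first exact: leaf_pruning_cut_sum.
by under eq_bigr => a _ do rewrite mulr1; exact: cut_sumE.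
Qed.

End Node.

End KappaPrec.

Section Counit.
Variables (A : Type) (R : comNzRingType) (phi : seq A -> R).
Local Open Scope ring_scope.
Implicit Types (t : dtree A) (u : seq (seq nat)).

Lemma rcut_node t u : is_node t -> [::] \notin u -> rcut t u = [:: prune t u].
Proof.
by case: t => // c r _ /(prune_node c r) [c' [r' [prune_t _ _ _]]]; rewrite /rcut prune_t.
Qed.

Lemma counit_delta_tree t : is_node t ->
  \sum_(b <- delta_tree t) (nilp b.1)%:R * Phi_char phi b.2 = phi_ext phi [:: t].
Proof.
case: t => // c r _; rewrite /delta_tree big_map /cuts big_filter big_mkcond ivs_node.
rewrite subsets_cons big_cat big_map.
rewrite [X in _ _ X = _]big_seq [X in _ _ X = _]big1 => [|u u_sub]; last first.
  have u_root := in_subtrees_root (in_subtrees_subsets u_sub).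
  by case: ifP; rewrite ?rcut_node ?mul0r.
rewrite big_seq (eq_bigr (fun u => (nilp u)%:R * Phi_char phi (pcut (DNode c r) [:: [::]]))).
  by rewrite -big_seq sum_subsets_nilp /pcut /Phi_char big_seq1 Monoid.simpm.
move=> u u_sub; rewrite admissible_root // /rcut prune_root ?mem_head //.
by case: {u_sub}u => [|p u]; rewrite /= ?mul1r ?mul0r.
Qed.

Lemma counit_delta x : all (@is_node A) x ->
  \sum_(b <- delta x) (nilp b.1)%:R * Phi_char phi b.2 = Phi_char phi x.
Proof.
elim: x => [_|t x IH /= /andP [t_node /IH x_counit]].
  by rewrite big_seq1 /Phi_char big_nil mulr1.
rewrite big_allpairs_dep Phi_char_cons -(counit_delta_tree t_node) -x_counit big_distrl.
apply: eq_bigr => b _; rewrite big_distrr; apply: eq_bigr => b' _.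
by rewrite Phi_char_cat /=; case: b.1; case: b'.1; rewrite /= ?mul0r ?mulr0 ?mul1r.
Qed.

End Counit.

Local Open Scope ring_scope.

Theorem mainTheorem8 (A : Type) (C : numClosedFieldType) (phi : seq A -> C)
    (x : seq (dtree A)) :
  all (@dtree_ok A) x ->
  Phi_char phi x = counit C x + prec (kappa phi) (Phi_char phi) x.
Proof.
case: x => [_|t x /= /andP [/andP [t_node t_reduced] x_ok]].
  by rewrite /Phi_char /prec /= !big_nil addr0.
have x_nodes : all (@is_node A) x by apply: sub_all x_ok => s /andP [].
case: t t_node t_reduced => // c r _ /and3P [r_nonnil _ _].
rewrite add0r Phi_char_cons -(counit_delta phi x_nodes).
have r_gt0 : (0 < size r)%N by case: r r_nonnil.
rewrite -(kappa_prec_node phi c r_gt0) mulr_suml.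
rewrite /prec /ldelta big_allpairs_dep /ldelta_tree big_map big_filter.
apply: eq_bigr => u avoid; rewrite mulr_sumr; apply: eq_bigr => b _.
have u_root : [::] \notin u by apply/negP => /(allP avoid); case: (rightmost_leaf _).
rewrite rcut_node // Phi_char_cat /=.
by case: b.1 => [|? ?]; rewrite /= ?mul1r ?mul0r ?mulr0 // mulrA.
Qed.
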